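(* Let $n,m\ge 3$ and let $G=P_n\square P_m$ be the grid graph. Every $3$-minimal $M$ of $G$ has either (i) two vertices $(i,j)$ and $(k,j)$ with $i\neq k$ and a third vertex $(p,q)$ with $i\le p\le k$ and $q\neq j$; or (ii) two vertices $(i,j)$ and $(i,k)$ with $j\neq k$ and a third vertex $(p,q)$ with $j\le q\le k$ and $p\neq i$.
   Context: The grid graph $P_n\square P_m$ has vertex set $\{(i,j):0\le i\le n-1,\ 0\le j\le m-1\}$, with $(i,j)$ adjacent to $(k,l)$ iff $|i-k|+|j-l|=1$; distance $d((i,j),(k,l))=|i-k|+|j-l|$. A vertex $w$ resolves $u,v$ if $d(w,u)\ne d(w,v)$; a set $R$ is resolving if every pair of distinct vertices is resolved by some vertex of $R$; a $3$-minimal is a resolving set $R$ of cardinality $3$ such that no $R\setminus\{x\}$, $x\in R$, is resolving. *)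

From mathcomp Require Import all_boot.
Set Implicit Arguments. Unset Strict Implicit. Unset Printing Implicit Defensive.

Definition gvert (n m : nat) : finType := ('I_n * 'I_m)%type.

Definition absd (a b : nat) : nat := (a - b) + (b - a).

Definition gdist (n m : nat) (u v : gvert n m) : nat :=
  absd u.1 v.1 + absd u.2 v.2.

Definition resolves (n m : nat) (w u v : gvert n m) : bool :=
  gdist w u != gdist w v.

Definition resolving (n m : nat) (R : {set gvert n m}) : Prop :=
  forall u v : gvert n m, u != v -> exists2 w, w \in R & resolves w u v.

Definition three_minimal (n m : nat) (R : {set gvert n m}) : Prop :=
  [/\ #|R| = 3, resolving R & forall x, x \in R -> ~ resolving (R :\ x)].

(* If the two other vertices of a triple lie strictly inside one open quadrant
   at its third vertex r, then the two neighbours of r pointing into that quadrant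
   are not resolved by the triple.  Among three vertices with pairwise distinct
   coordinates one always sits at such a corner, so two vertices of a 3-minimal
   set share a row or a column.  The third vertex is off that line: three
   vertices of one row resolve the grid only if the row is a boundary row and
   they contain both of its ends, and then the third vertex is redundant.  By
   the corner argument again, the third vertex projects between the other two. *)

From mathcomp Require Import all_boot.
From mathcomp Require Import zify.

Set Implicit Arguments. Unset Strict Implicit. Unset Printing Implicit Defensive.

Definition outside (a b c : nat) := ~~ (minn b c <= a <= maxn b c).

Lemma corner_exists a1 a2 a3 b1 b2 b3 :
  a1 != a2 -> a1 != a3 -> a2 != a3 -> b1 != b2 -> b1 != b3 -> b2 != b3 ->
  [|| outside a1 a2 a3 && outside b1 b2 b3, outside a2 a1 a3 && outside b2 b1 b3
    | outside a3 a1 a2 && outside b3 b1 b2].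
Proof. rewrite /outside; lia. Qed.

Lemma outside_side a b c : outside a b c -> [/\ a != b, a != c & (a < b) = (a < c)].
Proof. by rewrite /outside => o; split; lia. Qed.

Lemma absdnn k : absd k k = 0.
Proof. by rewrite /absd subnn. Qed.

Lemma absd_ends a b k s t : a <= k -> b <= k ->
  absd 0 a + s = absd 0 b + t -> absd k a + s = absd k b + t -> a = b /\ s = t.
Proof. by rewrite /absd; lia. Qed.

Lemma absd_end_inj a b c k : a <= k -> b <= k -> absd c a = absd c b ->
  c = 0 \/ c = k -> a = b.
Proof. by rewrite /absd; lia. Qed.

Definition step (r t : nat) := if r < t then r.+1 else r.-1.

Lemma step_ltn r t k : r < k -> t < k -> r != t -> step r t < k.
Proof. by rewrite /step; case: ifP; lia. Qed.

Lemma absd_step r t : r != t -> absd r (step r t) = 1.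
Proof. by rewrite /step /absd; case: ifP; lia. Qed.

Lemma absd_step_toward r t s : r != t -> r != s -> (r < t) = (r < s) ->
  absd s (step r t) + 1 = absd s r.
Proof. by rewrite /step /absd; case: ifP; lia. Qed.

Lemma card3_third (T : finType) (A : {set T}) x y :
  #|A| = 3 -> x \in A -> y \in A -> x != y ->
  exists z, [/\ z \in A, x != z, y != z & A = [set x; y; z]].
Proof.
move=> cA xA yA xy.
have yAx : y \in A :\ x by rewrite !inE eq_sym xy.
have /cards1P [z Axy] : #|A :\ x :\ y| == 1.
  by move: cA; rewrite (cardsD1 x) xA (cardsD1 y (A :\ x)) yAx; lia.
have : z \in A :\ x :\ y by rewrite Axy set11.
rewrite !inE => /and3P [zy zx zA]; exists z; split; rewrite 1?eq_sym //.
by rewrite -(setD1K xA) -(setD1K yAx) Axy setUA.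
Qed.

Section Grid.

Variables n m : nat.
Implicit Types (u v w x y z : gvert n m) (R M : {set gvert n m}).

Lemma gdist_eq0 u v : (gdist u v == 0) = (u == v).
Proof.
apply/eqP/eqP => [|->]; last by rewrite /gdist /absd; lia.
case: u v => [i j] [k l]; rewrite /gdist /absd /= => d.
by congr (_, _); apply: ord_inj; lia.
Qed.

Lemma not_resolving_pair R u v :
  u != v -> (forall w, w \in R -> gdist w u = gdist w v) -> ~ resolving R.
Proof. by move=> uv eqd /(_ u v uv) [w /eqd]; rewrite /resolves => ->; rewrite eqxx. Qed.

Lemma resolving_subset R M : R \subset M -> resolving R -> resolving M.
Proof. by move=> /subsetP sRM hR u v /hR [w /sRM]; exists w. Qed.

Lemma corner_not_resolving R r x y :
  R \subset [set r; x; y] -> outside r.1 x.1 y.1 -> outside r.2 x.2 y.2 ->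
  ~ resolving R.
Proof.
move=> /subsetP sR; case: r x y sR => [r1 r2] [x1 x2] [y1 y2] sR /=.
move=> /outside_side [rx1 ry1 s1] /outside_side [rx2 ry2 s2].
have an := step_ltn (ltn_ord r1) (ltn_ord x1) rx1.
have bm := step_ltn (ltn_ord r2) (ltn_ord x2) rx2.
apply: (@not_resolving_pair _ (Ordinal an, r2) (r1, Ordinal bm)).
  by rewrite -gdist_eq0 /gdist /= absd_step // addn1.
move=> [w1 w2] /sR; rewrite !inE !xpair_eqE => /orP [/orP [] |] /andP [/eqP -> /eqP ->];
  rewrite /gdist /=.
- by rewrite !absdnn !absd_step.
- have := absd_step_toward rx1 rx1 (erefl _); have := absd_step_toward rx2 rx2 (erefl _).
  lia.
- have := absd_step_toward rx1 ry1 s1; have := absd_step_toward rx2 ry2 s2.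
  lia.
Qed.

Lemma row_resolving_boundary R (j : 'I_m) :
  0 < n -> (forall w, w \in R -> w.2 = j) -> resolving R -> j = 0 :> nat \/ j = m.-1 :> nat.
Proof.
move=> n0 rowR hR; have := ltn_ord j.
case: (ltnP 0 j) => [j0|]; last by left; lia.
case: (ltnP j m.-1) => [jm|]; last by right; lia.
have jm' : j.+1 < m by lia.
have jm'' : j.-1 < m by lia.
case: (@not_resolving_pair R (Ordinal n0, Ordinal jm') (Ordinal n0, Ordinal jm'')) => //.
  by rewrite -gdist_eq0 /gdist /absd /=; lia.
by move=> w /rowR; rewrite /gdist /absd /= => ->; lia.
Qed.

Lemma row_resolving_end R (j : 'I_m) c :
  1 < n -> 1 < m -> c = 0 \/ c = n.-1 ->
  (forall w, w \in R -> w.2 = j) -> resolving R -> exists2 w, w \in R & w.1 = c :> nat.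
Proof.
move=> n1 m1 cb rowR hR.
case: (pickP [pred w in R | val w.1 == c]) => [w /andP [wR /eqP]|noc]; first by exists w.
pose j' := if j == 0 :> nat then 1 else j.-1.
have j'm : j' < m by move: (ltn_ord j); rewrite /j'; case: ifP; lia.
have j'j : absd j j' = 1 by move: (ltn_ord j); rewrite /j' /absd; case: ifP; lia.
have cn : c < n by lia.
have cc' : c != n.-1 - c by lia.
have c'n : step c (n.-1 - c) < n by apply: step_ltn; lia.
case: (@not_resolving_pair R (Ordinal cn, j) (Ordinal c'n, Ordinal j'm)) => //.
  by rewrite -gdist_eq0 /gdist /= j'j absd_step.
move=> [w1 w2] wR; move: (rowR _ wR) (noc (w1, w2)) (ltn_ord w1).
rewrite /= wR /gdist /= => -> /negbT wc w1n.
have side : (c < n.-1 - c) = (c < w1) by apply/idP/idP; lia.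
by rewrite j'j absdnn addn0 (absd_step_toward cc') // eq_sym.
Qed.

Lemma row_ends_resolving (e0 e1 : gvert n m) :
  e0.1 = 0 :> nat -> e1.1 = n.-1 :> nat -> e0.2 = e1.2 ->
  e0.2 = 0 :> nat \/ e0.2 = m.-1 :> nat -> resolving [set e0; e1].
Proof.
move=> e01 e11 e2 jb u v uv.
case: (boolP (resolves e0 u v)) => [?|]; first by exists e0; rewrite ?inE ?eqxx.
case: (boolP (resolves e1 u v)) => [?|]; first by exists e1; rewrite ?inE ?eqxx ?orbT.
rewrite /resolves !negbK => /eqP d1 /eqP d0.
case/negP: uv; move: d0 d1 jb; rewrite /gdist e01 e11 -e2.
case: u v => [u1 u2] [v1 v2] /= d0 d1 jb.
have ord_le_pred k (i : 'I_k) : i <= k.-1 by move: (ltn_ord i); lia.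
have [eq1 eq2] := absd_ends (ord_le_pred _ u1) (ord_le_pred _ v1) d0 d1.
have eq2' := absd_end_inj (ord_le_pred _ u2) (ord_le_pred _ v2) eq2 jb.
by rewrite xpair_eqE -!val_eqE /= eq1 eq2' !eqxx.
Qed.

Lemma three_minimal_not_row M (j : 'I_m) :
  1 < n -> 1 < m -> three_minimal M -> ~ (forall w, w \in M -> w.2 = j).
Proof.
move=> n1 m1 [c3 hR hmin] rowM.
have [e0 e0M e01] := row_resolving_end n1 m1 (or_introl erefl) rowM hR.
have [e1 e1M e11] := row_resolving_end n1 m1 (or_intror erefl) rowM hR.
have jb := row_resolving_boundary (ltnW n1) rowM hR.
have ends : resolving [set e0; e1] by apply: row_ends_resolving; rewrite ?rowM.
have [x xM] : exists2 x, x \in M & x \notin [set e0; e1].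
  apply/subsetPn/negP => /subset_leq_card; rewrite c3 cards2; by case: (_ != _).
rewrite !inE negb_or => /andP [xe0 xe1].
apply: (hmin x xM); apply: resolving_subset ends.
by apply/subsetP => w; rewrite !inE => /orP [] /eqP ->; rewrite ?e0M ?e1M eq_sym ?xe0 ?xe1.
Qed.

Definition spans_row M := exists i k j p q,
  [/\ (i, j) \in M, (k, j) \in M, (p, q) \in M, i != k & [/\ i <= p, p <= k & q != j]].

Definition spans_col M := exists i j k p q,
  [/\ (i, j) \in M, (i, k) \in M, (p, q) \in M, j != k & [/\ j <= q, q <= k & p != i]].

Lemma three_minimal_spans_row M x y :
  1 < n -> 1 < m -> three_minimal M -> x \in M -> y \in M -> x != y -> x.2 = y.2 ->
  spans_row M.
Proof.
move=> n1 m1 hM xM yM xy xy2; have [c3 hR _] := hM.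
have [z [zM _ _ eqM]] := card3_third c3 xM yM xy.
have xy1 : x.1 != y.1.
  by apply: contraNneq xy => xy1; rewrite [x]surjective_pairing xy1 xy2 -surjective_pairing.
have [zx2|zx2] := eqVneq z.2 x.2.
  case: (three_minimal_not_row (j := x.2) n1 m1 hM) => w.
  by rewrite eqM !inE => /orP [/orP [] |] /eqP ->.
have [between|out] := boolP (minn x.1 y.1 <= z.1 <= maxn x.1 y.1).
  case: (leqP x.1 y.1) => [le_xy|/ltnW le_yx].
    move: between; rewrite (minn_idPl le_xy) (maxn_idPr le_xy) => /andP [le1 le2].
    exists x.1, y.1, x.2, z.1, z.2; rewrite {2}xy2 -!surjective_pairing.
    by split.
  move: between; rewrite (minn_idPr le_yx) (maxn_idPl le_yx) => /andP [le1 le2].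
  exists y.1, x.1, x.2, z.1, z.2; rewrite {1}xy2 -!surjective_pairing.
  by split; rewrite // eq_sym.
case: (corner_not_resolving (r := z) (x := x) (y := y) _ out _ hR).
  by rewrite eqM; apply/subsetP => w; rewrite !inE => /orP [/orP [] |] ->; rewrite ?orbT.
by rewrite /outside -xy2 minnn maxnn -eqn_leq eq_sym.
Qed.

Lemma three_minimal_collision M :
  three_minimal M -> exists x y, [/\ x \in M, y \in M, x != y & x.1 = y.1 \/ x.2 = y.2].
Proof.
move=> [c3 hR _].
case: (pickP [pred xy : gvert n m * gvert n m | [&& xy.1 \in M, xy.2 \in M, xy.1 != xy.2
        & (xy.1.1 == xy.2.1) || (xy.1.2 == xy.2.2)]]).
  move=> [x y] /and4P [xM yM xy coinc]; exists x, y; split=> //.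
  by case/orP: coinc => /eqP; [left|right].
move=> noc; exfalso.
have apart u v : u \in M -> v \in M -> u != v -> (val u.1 != v.1) && (val u.2 != v.2).
  by move=> uM vM uv; move: (noc (u, v)); rewrite /= uM vM uv /= -!val_eqE => /norP [-> ->].
have /card_gt1P [x [y [xM yM xy]]] : 1 < #|M| by rewrite c3.
have [z [zM xz yz eqM]] := card3_third c3 xM yM xy.
have /andP [xy1 xy2] := apart _ _ xM yM xy.
have /andP [xz1 xz2] := apart _ _ xM zM xz.
have /andP [yz1 yz2] := apart _ _ yM zM yz.
case/or3P: (corner_exists xy1 xz1 yz1 xy2 xz2 yz2) => /andP [o1 o2];
  apply: (corner_not_resolving _ o1 o2 hR); rewrite eqM;
  by apply/subsetP => w; rewrite !inE => /orP [/orP [] |] ->; rewrite ?orbT.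
Qed.

End Grid.

Definition gtr n m (u : gvert n m) : gvert m n := (u.2, u.1).
Arguments gtr {n m} u.

Lemma gtrK n m : cancel (@gtr n m) (@gtr m n).
Proof. by case. Qed.

Lemma gdist_tr n m (u v : gvert n m) : gdist (gtr u) (gtr v) = gdist u v.
Proof. exact: addnC. Qed.

Lemma resolving_tr n m (R : {set gvert n m}) : resolving R -> resolving (gtr @^-1: R).
Proof.
move=> hR u v uv; have [|w wR] := hR (gtr u) (gtr v); first by rewrite (can_eq (@gtrK m n)).
exists (gtr w); first by rewrite inE gtrK.
by rewrite /resolves -[u](@gtrK m n) -[v](@gtrK m n) !gdist_tr.
Qed.

Lemma three_minimal_tr n m (M : {set gvert n m}) :
  three_minimal M -> three_minimal (gtr @^-1: M).
Proof.
have trD1 (R : {set gvert n m}) x : gtr @^-1: R :\ x = gtr @^-1: (R :\ gtr x).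
  by apply/setP => u; rewrite !inE (can_eq (@gtrK m n)).
have trK (R : {set gvert n m}) : gtr @^-1: (gtr @^-1: R) = R.
  by apply/setP => u; rewrite !inE gtrK.
case=> c3 hR hmin; split.
- rewrite -(can2_imset_pre M (@gtrK n m) (@gtrK m n)) card_imset //.
  exact: can_inj (@gtrK n m).
- exact: resolving_tr.
- move=> x; rewrite inE trD1 => /hmin nres /resolving_tr; by rewrite trK.
Qed.

Lemma spans_row_tr n m (M : {set gvert n m}) : spans_row (gtr @^-1: M) -> spans_col M.
Proof.
case=> i [k [j [p [q [ijM kjM pqM ik [ip pk qj]]]]]].
by move: ijM kjM pqM; rewrite !inE => *; exists j, i, k, q, p.
Qed.

Theorem proposition3 (n m : nat) (M : {set gvert n m}) :
  3 <= n -> 3 <= m -> three_minimal M ->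
  (exists i k j p q,
      [/\ (i, j) \in M, (k, j) \in M, (p, q) \in M, i != k
        & [/\ (i <= p)%N, (p <= k)%N & q != j]])
  \/
  (exists i j k p q,
      [/\ (i, j) \in M, (i, k) \in M, (p, q) \in M, j != k
        & [/\ (j <= q)%N, (q <= k)%N & p != i]]).
Proof.
move=> n3 m3 hM; have n1 : 1 < n by apply: ltnW. have m1 : 1 < m by apply: ltnW.
have [x [y [xM yM xy [col|row]]]] := three_minimal_collision hM.
  right; apply: spans_row_tr.
  apply: (three_minimal_spans_row (x := gtr x) (y := gtr y) m1 n1 (three_minimal_tr hM)).
  - by rewrite inE gtrK.
  - by rewrite inE gtrK.
  - by rewrite (can_eq (@gtrK n m)).
  - exact: col.
by left; apply: (three_minimal_spans_row n1 m1 hM xM yM xy row).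
Qed.
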